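(* Let $A\in\mathbf{R}^{n\times n}$, $C_j\in\mathbf{R}^{m_j\times n}$ ($j=1,\ldots,N$), $H\in\mathbf{R}^{p\times n}$, and let $\mathcal{L}$ be the Laplacian of a directed graph $\mathbf{G}$ on $N$ nodes which has a spanning tree with root node $i$. Set $\bar A=I_N\otimes A$, $\bar C=\mathrm{diag}[C_1,\ldots,C_N]$, $\bar H=\mathcal{L}\otimes H$. Suppose $(C_i,A)$ is detectable and $\mathcal{O}_H\cap\mathcal{C}_j=\{0\}$ for all $j=1,\ldots,N$, where $\mathcal{C}_j$ is the undetectable subspace of $(C_j,A)$ and $\mathcal{O}_H=\bigcap_{l=1}^n\operatorname{Ker}(HA^{l-1})$. Then the pair $\left(\begin{bmatrix}\bar C\\ \bar H\end{bmatrix},\bar A\right)$ is detectable.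
   Context: Directed graph on $\{1,\ldots,N\}$ without self-loops; adjacency matrix $\mathbf{A}=[\mathbf{a}_{kl}]$ with $\mathbf{a}_{kl}=1$ if there is an edge from $l$ to $k$, else $0$; $p_k$ the in-degree of node $k$; Laplacian $\mathcal{L}=\mathrm{diag}[p_1,\ldots,p_N]-\mathbf{A}$. A spanning tree rooted at $i$ is a directed tree containing all nodes in which every node is reachable from $i$ by a directed path. For a square matrix $F$ with minimal polynomial $\alpha_F=\alpha_F^-\alpha_F^+$ (zeros of $\alpha_F^-$ in the open left half-plane, of $\alpha_F^+$ in the closed right half-plane), the undetectable subspace of $(G,F)$ is $\bigcap_{l=1}^n\operatorname{Ker}(GF^{l-1})\cap\operatorname{Ker}\alpha_F^+(F)$; the pair is detectable iff this subspace is $\{0\}$. *)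

From HB Require Import structures.
From mathcomp Require Import all_boot all_order all_algebra.
From mathcomp Require Import reals.
From mathcomp Require Import complex.
Set Implicit Arguments. Unset Strict Implicit. Unset Printing Implicit Defensive.
Import Order.TTheory GRing.Theory Num.Theory.
Local Open Scope ring_scope.

Section Defs.
Variable R : realType.

Definition peval (K : nzRingType) n (F : 'M[K]_n) (q : {poly K}) : 'M[K]_n :=
  \sum_(k < size q) q`_k *: F ^+ k.

(** Minimal polynomial of a square matrix of arbitrary size
    (mathcomp's [mxminpoly] for positive size; [1] for the empty matrix). *)
Definition minpoly (K : fieldType) n : 'M[K]_n -> {poly K} :=
  match n return 'M[K]_n -> {poly K} with
  | 0 => fun _ => 1
  | n'.+1 => fun F => mxminpoly F
  end.

Definition cplx_mx m n (M : 'M[R]_(m, n)) : 'M[R[i]]_(m, n) :=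
  map_mx (fun r => (r%:C)%C) M.

(** Multiset of complex roots of the minimal polynomial of F
    (so that alpha_F = lead_coef * prod (X - z)). *)
Definition minpoly_roots n (F : 'M[R]_n) : seq R[i] :=
  proj1_sig (closed_field_poly_normal (map_poly (fun r => (r%:C)%C) (minpoly F))).

Definition alpha_plus n (F : 'M[R]_n) : {poly R[i]} :=
  \prod_(z <- minpoly_roots F | 0 <= Re z) ('X - z%:P).

(** Undetectable subspace of (G,F), as a predicate on real vectors:
    intersection of Ker (G F^(l-1)), l = 1..n, with Ker alpha_F^+(F). *)
Definition undetectable m n (G : 'M[R]_(m, n)) (F : 'M[R]_n) (x : 'cV[R]_n) : Prop :=
  (forall l : 'I_n, G *m F ^+ l *m x = 0) /\
  peval (cplx_mx F) (alpha_plus F) *m cplx_mx x = 0.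

Definition detectable m n (G : 'M[R]_(m, n)) (F : 'M[R]_n) : Prop :=
  forall x, undetectable G F x -> x = 0.

Definition unobservable p n (H : 'M[R]_(p, n)) (A : 'M[R]_n) (x : 'cV[R]_n) : Prop :=
  forall l : 'I_n, H *m A ^+ l *m x = 0.

End Defs.

(** Directed graphs on 'I_N: [e l k] means there is an edge from l to k. *)
Definition no_self_loops N (e : rel 'I_N) := forall k, ~~ e k k.

Definition adjacency (K : nzRingType) N (e : rel 'I_N) : 'M[K]_N :=
  \matrix_(k, l) (e l k)%:R.

Definition indeg N (e : rel 'I_N) (k : 'I_N) : nat := #|[set l | e l k]|.

Definition laplacian (K : nzRingType) N (e : rel 'I_N) : 'M[K]_N :=
  diag_mx (\row_k (indeg e k)%:R) - adjacency K e.

Definition has_spanning_tree_rooted N (e : rel 'I_N) (i : 'I_N) : Prop :=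
  exists t : rel 'I_N,
    (forall l k, t l k -> e l k) /\
    #|[set l | t l i]| = 0 /\
    (forall k, k != i -> #|[set l | t l k]| = 1) /\
    (forall k, connect t i k).

Definition blockdiag_const (K : nzRingType) N n (A : 'M[K]_n) :
  'M[K]_(\sum_(j < N) n) := \mxdiag_(j < N) A.

Definition blockdiag (K : nzRingType) N (m : 'I_N -> nat) n
  (C : forall j : 'I_N, 'M[K]_(m j, n)) :
  'M[K]_(\sum_(j < N) m j, \sum_(j < N) n) :=
  \mxblock_(j < N, k < N) (if j == k then C j else 0).

Definition kron (K : nzRingType) N p n (L : 'M[K]_N) (H : 'M[K]_(p, n)) :
  'M[K]_(\sum_(j < N) p, \sum_(k < N) n) :=
  \mxblock_(j < N, k < N) (L j k *: H).

From HB Require Import structures.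
From mathcomp Require Import all_boot all_order all_algebra.
From mathcomp Require Import reals complex.
Import Order.TTheory GRing.Theory Num.Theory.
Local Open Scope ring_scope.

(* Split a state of the network into its node components x_1, ..., x_N.
   The block-diagonal rows of an undetectable state say that every x_j lies
   in the undetectable subspace of (C_j, A); the Laplacian rows say that, for
   each l, the family (H A^l x_j)_j lies in the kernel of L.  Along the
   spanning tree the latter forces H A^l x_j = H A^l x_i, and x_i = 0 by
   detectability of (C_i, A); hence every x_j lies in O_H and in C_j, so it
   vanishes.  The right-half-plane factor of the minimal polynomial is the
   same for I_N (x) A as for A, since both matrices have the same minimal
   polynomial. *)

Lemma mxcolZ (K : pzRingType) N (p_ : 'I_N -> nat) m (a : K)
    (X : forall j, 'M[K]_(p_ j, m)) :
  \mxcol_j (a *: X j) = a *: \mxcol_j X j.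
Proof. by apply/matrixP => r c; rewrite !mxE. Qed.

Section BlockProducts.
Context {K : nzRingType} {N n r : nat}.
Implicit Types (D : 'M[K]_n) (X : 'I_N -> 'M[K]_(n, r)).

Lemma mxdiag_exp_mul_mxcol D X k :
  (\mxdiag_(j < N) D) ^+ k *m \mxcol_j X j = \mxcol_j (D ^+ k *m X j).
Proof.
elim: k => [|k IHk].
  by rewrite !expr0 mul1mx; apply: eq_mxcol => j; rewrite mul1mx.
rewrite exprS -mulmxE -mulmxA IHk mul_mxdiag_mxcol.
by apply: eq_mxcol => j; rewrite exprS -mulmxE mulmxA.
Qed.

Lemma peval_mxdiag_mul_mxcol D q X :
  peval (\mxdiag_(j < N) D) q *m \mxcol_j X j = \mxcol_j (peval D q *m X j).
Proof.
rewrite /peval mulmx_suml.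
rewrite (eq_bigr (fun k : 'I_(size q) => \mxcol_j (q`_k *: (D ^+ k *m X j))));
  last by move=> k _; rewrite -scalemxAl mxdiag_exp_mul_mxcol mxcolZ.
rewrite -mxcol_sum; apply: eq_mxcol => j.
by rewrite mulmx_suml; apply: eq_bigr => k _; rewrite scalemxAl.
Qed.

Lemma blockdiag_mul_mxcol (m : 'I_N -> nat) (C : forall j, 'M[K]_(m j, n)) X :
  blockdiag C *m \mxcol_j X j = \mxcol_j (C j *m X j).
Proof.
rewrite /blockdiag mul_mxblock_mxrow; apply: eq_mxcol => j.
rewrite (bigD1 j) //= eqxx big1 ?addr0 // => k /negbTE.
by rewrite eq_sym => ->; rewrite mul0mx.
Qed.

Lemma kron_mul_mxcol p (L : 'M[K]_N) (H : 'M[K]_(p, n)) X :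
  kron L H *m \mxcol_j X j = \mxcol_j (\sum_k L j k *: (H *m X k)).
Proof.
rewrite /kron mul_mxblock_mxrow; apply: eq_mxcol => j.
by apply: eq_bigr => k _; rewrite scalemxAl.
Qed.

End BlockProducts.

Lemma peval_mxdiag_eq0 (K : nzRingType) N n (D : 'M[K]_n) q (j0 : 'I_N) :
  (peval (\mxdiag_(j < N) D) q == 0) = (peval D q == 0).
Proof.
apply/eqP/eqP => [pD0 | pD0].
  pose E j : 'M[K]_n := if j == j0 then 1%:M else 0.
  have := congr1 (fun M => submxcol M j0) (peval_mxdiag_mul_mxcol D q E).
  by rewrite pD0 mul0mx submxcol0 mxcolK /E eqxx mulmx1.
rewrite -[peval _ q]mulmx1 -(submxcolK (1%:M : 'M[K]_(\sum_(j < N) n))).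
rewrite peval_mxdiag_mul_mxcol pD0.
by under eq_mxcol do rewrite mul0mx; rewrite mxcol0.
Qed.

Lemma peval_horner_mx (K : comNzRingType) n (F : 'M[K]_n.+1) q :
  horner_mx F q = peval F q.
Proof.
rewrite /peval -{1}[q]coefK poly_def rmorph_sum /=.
by apply: eq_bigr => k _; rewrite linearZ /= rmorphXn /= horner_mx_X.
Qed.

Lemma minpoly_dvdp (K : fieldType) n (F : 'M[K]_n) q :
  (minpoly F %| q) = (peval F q == 0).
Proof.
case: n F => [|n] F /=.
  by rewrite dvd1p; apply/esym/eqP; apply: flatmx0.
by rewrite -peval_horner_mx; apply/mxminpoly_minP/eqP.
Qed.

Lemma minpoly_monic (K : fieldType) n (F : 'M[K]_n) : minpoly F \is monic.
Proof. by case: n F => [|n] F /=; [exact: monic1 | exact: mxminpoly_monic]. Qed.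

Lemma minpoly_mxdiag (K : fieldType) N n (D : 'M[K]_n) (j0 : 'I_N) :
  minpoly (\mxdiag_(j < N) D) = minpoly D.
Proof.
apply/eqP; rewrite -eqp_monic ?minpoly_monic //; apply/andP; split.
  by rewrite minpoly_dvdp (@peval_mxdiag_eq0 _ N n D _ j0) -minpoly_dvdp.
by rewrite minpoly_dvdp -(@peval_mxdiag_eq0 _ N n D _ j0) -minpoly_dvdp.
Qed.

Section Complexification.
Variable R : realType.

Lemma alpha_plus_blockdiag_const N n (A : 'M[R]_n) (j0 : 'I_N) :
  alpha_plus (blockdiag_const N A) = alpha_plus A.
Proof. by rewrite /alpha_plus /minpoly_roots (@minpoly_mxdiag _ N n A j0). Qed.

Lemma cplx_mx_mxdiag N n (A : 'M[R]_n) :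
  cplx_mx (\mxdiag_(j < N) A) = \mxdiag_(j < N) cplx_mx A.
Proof.
apply/matrixP => r c; rewrite !mxE.
by case: eqP => _; rewrite ?conform_mx_id !mxE.
Qed.

Lemma submxcol_cplx_mx N n (x : 'cV[R]_(\sum_(j < N) n)) j :
  submxcol (cplx_mx x) j = cplx_mx (submxcol x j).
Proof. by apply/matrixP => r c; rewrite !mxE. Qed.

End Complexification.

Section Laplacian.
Context {N : nat} {e : rel 'I_N}.

Lemma laplacian_mulE (K : nzRingType) (w : 'I_N -> K) j :
  \sum_k laplacian K e j k * w k = \sum_k (e k j)%:R * (w j - w k).
Proof.
rewrite /laplacian /adjacency.
under eq_bigr do rewrite !mxE mulrBl.
rewrite sumrB (bigD1 j) //= eqxx mulr1n big1 ?addr0; last first.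
  by move=> k /negbTE; rewrite eq_sym => ->; rewrite mulr0n mul0r.
under [RHS]eq_bigr do rewrite mulrBr.
rewrite sumrB -mulr_suml /indeg -sum1_card natr_sum big_mkcond /=.
by congr (_ * _ - _); apply: eq_bigr => k _; rewrite inE; case: (e k j).
Qed.

Context {R : realDomainType} {i : 'I_N}.
Hypothesis connect_root : forall k, connect e i k.

(* A maximum of a Laplacian-harmonic w propagates backwards along edges,
   hence back to the root. *)
Lemma laplacian_kernel_le_root (w : 'I_N -> R) :
  (forall j, \sum_k laplacian R e j k * w k = 0) -> forall k, w k <= w i.
Proof.
move=> Lw0; have [k0 _ w_max] := @arg_maxP _ _ 'I_N i predT w isT.
have edge_max x y : e x y -> w y = w k0 -> w x = w k0.
  move=> exy wy; have /eqP := Lw0 y.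
  rewrite laplacian_mulE psumr_eq0; last first.
    by move=> k _; rewrite mulr_ge0 ?ler0n // subr_ge0 wy; exact: w_max.
  by move/allP/(_ x (mem_index_enum _)); rewrite exy mul1r subr_eq0 => /eqP <-.
have path_max s x : path e x s -> w (last x s) = w k0 -> w x = w k0.
  elim: s x => [|y s IHs] x //= /andP[exy ey_s] w_last.
  exact: edge_max exy (IHs _ ey_s w_last).
have /connectP[s e_s k0_last] := connect_root k0.
by move=> k; rewrite (path_max s i e_s) -?k0_last //; exact: w_max.
Qed.

Lemma laplacian_kernel_const (w : 'I_N -> R) :
  (forall j, \sum_k laplacian R e j k * w k = 0) -> forall k, w k = w i.
Proof.
move=> Lw0 k; apply/eqP; rewrite eq_le (laplacian_kernel_le_root _ Lw0 k) /=.
rewrite -lerN2 (laplacian_kernel_le_root (fun k => - w k)) // => j.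
by under eq_bigr do rewrite mulrN; rewrite sumrN Lw0 oppr0.
Qed.

Lemma laplacian_mx_kernel_eq0 {p q} (Y : 'I_N -> 'M[R]_(p, q)) :
    (forall j, \sum_k laplacian R e j k *: Y k = 0) -> Y i = 0 ->
  forall k, Y k = 0.
Proof.
move=> LY0 Yi0 k; apply/matrixP => r c; rewrite mxE.
rewrite (laplacian_kernel_const (fun k => Y k r c)) ?Yi0 ?mxE // => j.
have /(congr1 (fun M : 'M[R]_(p, q) => M r c)) := LY0 j.
by rewrite summxE mxE; under eq_bigr do rewrite mxE.
Qed.

End Laplacian.

Lemma spanning_tree_connect N (e : rel 'I_N) i :
  has_spanning_tree_rooted e i -> forall k, connect e i k.
Proof.
move=> [t [sub_te [_ [_ t_connect]]]] k.
by apply: connect_sub (t_connect k) => a b /sub_te /connect1.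
Qed.

Section NetworkDetectability.
Context {R : realType} {n N p : nat} {m : 'I_N -> nat}.
Context {A : 'M[R]_n} {C : forall j, 'M[R]_(m j, n)} {H : 'M[R]_(p, n)}.
Context {L : 'M[R]_N}.
Variable j0 : 'I_N.

Lemma undetectable_network_blocks (x : 'cV[R]_(\sum_(j < N) n)) :
    undetectable (col_mx (blockdiag C) (kron L H)) (blockdiag_const N A) x ->
  (forall j, undetectable (C j) A (submxcol x j)) /\
  (forall l : 'I_n, forall j,
     \sum_k L j k *: (H *m A ^+ l *m submxcol x k) = 0).
Proof.
move=> [obs0 alpha0]; set X := submxcol x.
have n_le : (n <= \sum_(j < N) n)%N by rewrite (bigD1 j0) //= leq_addr.
have obs_rows (l : 'I_n) j :
    C j *m A ^+ l *m X j = 0 /\ \sum_k L j k *: (H *m A ^+ l *m X k) = 0.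
  have /eqP := obs0 (widen_ord n_le l).
  rewrite -mulmxA -[x]submxcolK mxdiag_exp_mul_mxcol mul_col_mx col_mx_eq0.
  rewrite blockdiag_mul_mxcol kron_mul_mxcol => /andP[/eqP C_rows /eqP L_rows].
  move/(congr1 (fun M => submxcol M j)): C_rows L_rows.
  rewrite mxcolK submxcol0 mulmxA => -> /(congr1 (fun M => submxcol M j)).
  by rewrite mxcolK submxcol0; under eq_bigr do rewrite mulmxA.
have alpha_blocks j : peval (cplx_mx A) (alpha_plus A) *m cplx_mx (X j) = 0.
  move: alpha0; rewrite (@alpha_plus_blockdiag_const _ N n A j0) /blockdiag_const.
  rewrite cplx_mx_mxdiag -[cplx_mx x]submxcolK peval_mxdiag_mul_mxcol.
  move/(congr1 (fun M => submxcol M j)).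
  by rewrite mxcolK submxcol0 submxcol_cplx_mx.
split=> [j | l j]; last by case: (obs_rows l j).
by split=> [l|]; [case: (obs_rows l j) | exact: alpha_blocks].
Qed.

End NetworkDetectability.

Theorem corollary2 (R : realType) (n N p : nat) (m : 'I_N -> nat)
  (A : 'M[R]_n) (C : forall j : 'I_N, 'M[R]_(m j, n)) (H : 'M[R]_(p, n))
  (e : rel 'I_N) (i : 'I_N) :
  no_self_loops e ->
  has_spanning_tree_rooted e i ->
  detectable (C i) A ->
  (forall j : 'I_N, forall x : 'cV[R]_n,
      unobservable H A x -> undetectable (C j) A x -> x = 0) ->
  detectable
    (col_mx (blockdiag C) (kron (laplacian R e) H))
    (blockdiag_const N A).
Proof.
(* Self-loops would cancel in the Laplacian. *)
move=> _ /spanning_tree_connect connect_root detCi OH_cap_Cj x undet_x.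
have [undet_blocks kernel_L] := undetectable_network_blocks i _ undet_x.
have xi0 : submxcol x i = 0 by apply: detCi.
have unobs_blocks k : unobservable H A (submxcol x k).
  move=> l; apply: (laplacian_mx_kernel_eq0 connect_root _ (kernel_L l)).
  by rewrite xi0 mulmx0.
rewrite -[x]submxcolK.
under eq_mxcol => j do rewrite (OH_cap_Cj j _ (unobs_blocks j) (undet_blocks j)).
exact: mxcol0.
Qed.
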